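(* Let $\mathcal C$ be a quantum channel on a finite-dimensional system $A$, let $v\ge1$, and let $\widetilde{\mathcal C}$ be a vacuum extension of $\mathcal C$ with a $v$-dimensional vacuum sector. Let $\{\widetilde C_i=C_i\oplus C_{\mathrm{Vac},i}\}_{i=1}^r$ be a Kraus representation of $\widetilde{\mathcal C}$ consisting of linearly independent operators, and let $z$ be the number of indices $i$ with $C_i=0$. If $\widetilde{\mathcal C}$ is an extreme point of the convex set of vacuum extensions of $\mathcal C$ with $v$-dimensional vacuum sector, then $z\le\sqrt{v^2+1}-1$. In particular, if $v=1$, none of the operators $C_i$ is zero.
   Context: $\mathrm{Vac}$ is a $v$-dimensional sector orthogonal to $A$. A vacuum extension of $\mathcal C$ is a channel $\widetilde{\mathcal C}$ on $A\oplus\mathrm{Vac}$ such that (i) states supported in $A$ are mapped to states supported in $A$ and states supported in $\mathrm{Vac}$ are mapped to states supported in $\mathrm{Vac}$ (No Leakage Condition), and (ii) its restriction to $A$ (the channel with Kraus operators $P_A\widetilde C_iP_A$) is $\mathcal C$. Such extensions form a convex set; its Kraus operators have block form $C_i\oplus C_{\mathrm{Vac},i}$ with $C_i$ on $\mathcal H_A$ and $C_{\mathrm{Vac},i}$ on $\mathcal H_{\mathrm{Vac}}$. *)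

From HB Require Import structures.
From mathcomp Require Import all_boot all_order all_algebra.
Set Implicit Arguments. Unset Strict Implicit. Unset Printing Implicit Defensive.
Import Order.TTheory GRing.Theory Num.Theory.
Local Open Scope ring_scope.

Section QDefs.
Variable C : numClosedFieldType.

Definition adjmx m n (M : 'M[C]_(m, n)) : 'M[C]_(n, m) := (map_mx Num.conj M)^T.

Definition psd n (M : 'M[C]_n) : Prop :=
  forall x : 'cV[C]_n, 0 <= (adjmx x *m M *m x) 0 0.

Definition is_state n (rho : 'M[C]_n) : Prop := psd rho /\ \tr rho = 1.

Definition kraus_map n r (K : 'I_r -> 'M[C]_n) (rho : 'M[C]_n) : 'M[C]_n :=
  \sum_(i < r) K i *m rho *m adjmx (K i).

Definition kraus_tp n r (K : 'I_r -> 'M[C]_n) : Prop :=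
  \sum_(i < r) adjmx (K i) *m K i = 1%:M.

Definition kraus_rep n (Phi : 'M[C]_n -> 'M[C]_n) r (K : 'I_r -> 'M[C]_n) : Prop :=
  kraus_tp K /\ forall rho, Phi rho = kraus_map K rho.

Definition is_channel n (Phi : 'M[C]_n -> 'M[C]_n) : Prop :=
  exists r (K : 'I_r -> 'M[C]_n), kraus_rep Phi K.

Definition lin_indep n r (K : 'I_r -> 'M[C]_n) : Prop :=
  forall a : 'I_r -> C, \sum_(i < r) a i *: K i = 0 -> forall i, a i = 0.

(* H_A (+) H_Vac, with A the first d coordinates and Vac the last v. *)
Definition supp_A d v (M : 'M[C]_(d + v)) : Prop :=
  ursubmx M = 0 /\ dlsubmx M = 0 /\ drsubmx M = 0.
Definition supp_Vac d v (M : 'M[C]_(d + v)) : Prop :=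
  ulsubmx M = 0 /\ ursubmx M = 0 /\ dlsubmx M = 0.

Definition no_leakage d v (Ct : 'M[C]_(d + v) -> 'M[C]_(d + v)) : Prop :=
  (forall rho, is_state rho -> supp_A rho -> supp_A (Ct rho)) /\
  (forall rho, is_state rho -> supp_Vac rho -> supp_Vac (Ct rho)).

(* restriction of Ct to A: the channel with Kraus operators P_A Ct_i P_A,
   viewed on H_A; i.e. rho |-> P_A Ct(P_A rho P_A) P_A *)
Definition restrict_A d v (Ct : 'M[C]_(d + v) -> 'M[C]_(d + v)) (rho : 'M[C]_d)
  : 'M[C]_d := ulsubmx (Ct (block_mx rho 0 0 (0 : 'M[C]_v))).

Definition vacuum_extension d v (Ch : 'M[C]_d -> 'M[C]_d)
  (Ct : 'M[C]_(d + v) -> 'M[C]_(d + v)) : Prop :=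
  is_channel Ct /\ no_leakage Ct /\ forall rho, restrict_A Ct rho = Ch rho.

Definition extreme_vacuum_extension d v (Ch : 'M[C]_d -> 'M[C]_d)
  (Ct : 'M[C]_(d + v) -> 'M[C]_(d + v)) : Prop :=
  vacuum_extension Ch Ct /\
  forall (C1 C2 : 'M[C]_(d + v) -> 'M[C]_(d + v)) (t : C),
    vacuum_extension Ch C1 -> vacuum_extension Ch C2 ->
    0 < t < 1 -> (forall rho, Ct rho = t *: C1 rho + (1 - t) *: C2 rho) ->
    (forall rho, C1 rho = Ct rho) /\ (forall rho, C2 rho = Ct rho).

End QDefs.

(* No leakage forces every Kraus operator to be block diagonal,
   K_i = C_i (+) V_i.  For a Hermitian r x r matrix X and small e, the map
   rho |-> \sum_ab (delta_ab + e X_ab) K_a rho K_b^dagger is again a vacuum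
   extension of the same channel provided X_ab = 0 unless C_a = 0 or C_b = 0
   (the A-sector is untouched) and \sum_ab X_ab^* V_a^dagger V_b = 0 (trace is
   preserved).  The given extension is the midpoint of the perturbations by e
   and -e, so extremality and linear independence of the K_i force X = 0.  If
   z of the C_i vanish and C_k does not, the pairs in (Z + {k})^2 other than
   (k, k) leave (z + 1)^2 - 1 free entries subject to v^2 linear constraints,
   whence (z + 1)^2 - 1 <= v^2. *)

From HB Require Import structures.
From mathcomp Require Import all_boot all_order all_algebra.
From mathcomp Require Import ring zify.
Import Order.TTheory GRing.Theory Num.Theory.
Local Open Scope ring_scope.

Set Implicit Arguments. Unset Strict Implicit. Unset Printing Implicit Defensive.

Section Adjoint.
Variable C : numClosedFieldType.

Lemma adjmxE m n (M : 'M[C]_(m, n)) i j : adjmx M i j = (M j i)^*.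
Proof. by rewrite /adjmx !mxE. Qed.

Lemma adjmxK m n (M : 'M[C]_(m, n)) : adjmx (adjmx M) = M.
Proof. by apply/matrixP => i j; rewrite !adjmxE conjCK. Qed.

Lemma adjmx0 m n : adjmx (0 : 'M[C]_(m, n)) = 0.
Proof. by apply/matrixP => i j; rewrite adjmxE !mxE rmorph0. Qed.

Lemma adjmxD m n (M N : 'M[C]_(m, n)) : adjmx (M + N) = adjmx M + adjmx N.
Proof. by apply/matrixP => i j; rewrite !(adjmxE, mxE) rmorphD. Qed.

Lemma adjmxZ m n a (M : 'M[C]_(m, n)) : adjmx (a *: M) = a^* *: adjmx M.
Proof. by apply/matrixP => i j; rewrite !(adjmxE, mxE) rmorphM. Qed.

Lemma adjmx_sum m n I (s : seq I) (P : pred I) (F : I -> 'M[C]_(m, n)) :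
  adjmx (\sum_(i <- s | P i) F i) = \sum_(i <- s | P i) adjmx (F i).
Proof.
apply/matrixP => i j; rewrite adjmxE !summxE rmorph_sum.
by apply: eq_bigr => k _; rewrite adjmxE.
Qed.

Lemma adjmxM m n p (M : 'M[C]_(m, n)) (N : 'M[C]_(n, p)) :
  adjmx (M *m N) = adjmx N *m adjmx M.
Proof.
apply/matrixP => i j; rewrite adjmxE !mxE rmorph_sum; apply: eq_bigr => k _.
by rewrite !adjmxE rmorphM mulrC.
Qed.

Lemma adjmx_delta m n (i : 'I_m) (j : 'I_n) :
  adjmx (delta_mx i j) = delta_mx j i :> 'M[C]_(n, m).
Proof.
apply/matrixP => a b; rewrite adjmxE !mxE.
by case: (b == i); case: (a == j); rewrite /= ?rmorph1 ?rmorph0.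
Qed.

Lemma adjmx_block m1 m2 n1 n2 (Ul : 'M[C]_(m1, n1)) (Ur : 'M[C]_(m1, n2))
  (Dl : 'M[C]_(m2, n1)) (Dr : 'M[C]_(m2, n2)) :
  adjmx (block_mx Ul Ur Dl Dr) = block_mx (adjmx Ul) (adjmx Dl) (adjmx Ur) (adjmx Dr).
Proof. by rewrite /adjmx map_block_mx tr_block_mx. Qed.

Lemma mul_delta_adjmxE m n k (M : 'M[C]_(m, n)) (N : 'M[C]_(k, n)) p q s u :
  (M *m delta_mx p q *m adjmx N) s u = M s p * (N u q)^*.
Proof.
rewrite -(mul_delta_mx (0 : 'I_1)) mulmxA -colE -mulmxA -rowE !mxE big_ord1.
by rewrite !mxE.
Qed.

End Adjoint.

Section KrausCoefficients.
Variables (C : numClosedFieldType) (n r : nat) (K : 'I_r -> 'M[C]_n).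

Definition kraus_map_mx (M : 'M[C]_r) (rho : 'M[C]_n) : 'M[C]_n :=
  \sum_a \sum_b M a b *: (K a *m rho *m adjmx (K b)).

Definition kraus_tp_mx (M : 'M[C]_r) : 'M[C]_n :=
  \sum_a \sum_b (M a b)^* *: (adjmx (K a) *m K b).

Lemma kraus_map_mxD M N rho :
  kraus_map_mx (M + N) rho = kraus_map_mx M rho + kraus_map_mx N rho.
Proof.
rewrite /kraus_map_mx -big_split; apply: eq_bigr => a _; rewrite -big_split.
by apply: eq_bigr => b _; rewrite mxE scalerDl.
Qed.

Lemma kraus_map_mxZ c M rho : kraus_map_mx (c *: M) rho = c *: kraus_map_mx M rho.
Proof.
rewrite /kraus_map_mx scaler_sumr; apply: eq_bigr => a _; rewrite scaler_sumr.
by apply: eq_bigr => b _; rewrite mxE scalerA.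
Qed.

Lemma kraus_map_mx1 rho : kraus_map_mx 1%:M rho = kraus_map K rho.
Proof.
apply: eq_bigr => a _; rewrite (bigD1 a) //= big1 ?addr0 => [|b ba].
  by rewrite mxE eqxx scale1r.
by rewrite mxE eq_sym (negbTE ba) scale0r.
Qed.

Lemma kraus_map_mx0 M : kraus_map_mx M 0 = 0.
Proof.
by apply: big1 => a _; apply: big1 => b _; rewrite mulmx0 mul0mx scaler0.
Qed.

Lemma kraus_tp_mxD M N : kraus_tp_mx (M + N) = kraus_tp_mx M + kraus_tp_mx N.
Proof.
rewrite /kraus_tp_mx -big_split; apply: eq_bigr => a _; rewrite -big_split.
by apply: eq_bigr => b _; rewrite mxE rmorphD scalerDl.
Qed.

Lemma kraus_tp_mxZ c M : kraus_tp_mx (c *: M) = c^* *: kraus_tp_mx M.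
Proof.
rewrite /kraus_tp_mx scaler_sumr; apply: eq_bigr => a _; rewrite scaler_sumr.
by apply: eq_bigr => b _; rewrite mxE rmorphM scalerA.
Qed.

Lemma kraus_tp_mx1 : kraus_tp_mx 1%:M = \sum_a adjmx (K a) *m K a.
Proof.
apply: eq_bigr => a _; rewrite (bigD1 a) //= big1 ?addr0 => [|b ba].
  by rewrite mxE eqxx rmorph1 scale1r.
by rewrite mxE eq_sym (negbTE ba) rmorph0 scale0r.
Qed.

Lemma kraus_tp_mx_adj M : kraus_tp_mx (adjmx M) = adjmx (kraus_tp_mx M).
Proof.
rewrite /kraus_tp_mx adjmx_sum exchange_big; apply: eq_bigr => b _.
rewrite adjmx_sum; apply: eq_bigr => a _.
by rewrite adjmxZ adjmxM adjmxK adjmxE.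
Qed.

(* Evaluating at [delta_mx p q] reads off the coefficients of the [K a]. *)
Lemma kraus_map_mx_inj M :
  lin_indep K -> (forall rho, kraus_map_mx M rho = 0) -> M = 0.
Proof.
move=> Kfree M0.
have row0 a u q : \sum_b M a b * (K b u q)^* = 0.
  apply: (Kfree (fun a => \sum_b M a b * (K b u q)^*)).
  apply/matrixP => s p; rewrite summxE mxE.
  transitivity (kraus_map_mx M (delta_mx p q) s u); last by rewrite M0 mxE.
  rewrite summxE; apply: eq_bigr => a' _.
  rewrite summxE mxE mulr_suml; apply: eq_bigr => b _.
  by rewrite mxE mul_delta_adjmxE mulrCA mulrC.
apply/matrixP => a b; rewrite mxE; apply/eqP; rewrite -conjC_eq0; apply/eqP.
apply: (Kfree (fun b => (M a b)^*)); apply/matrixP => u q.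
rewrite summxE mxE.
transitivity ((\sum_b M a b * (K b u q)^*)^*); last by rewrite row0 conjC0.
rewrite rmorph_sum; apply: eq_bigr => c _.
by rewrite mxE -[in LHS](conjCK (K c u q)) -rmorphM.
Qed.

End KrausCoefficients.

Section Gram.
Variables (C : numClosedFieldType) (r : nat).

(* Positive semidefiniteness, in the factored form that yields Kraus operators. *)
Definition gram_mx (M : 'M[C]_r) : Prop :=
  exists s (G : 'M[C]_(s, r)), M = G^T *m map_mx Num.conj G.

Lemma gram_mx0 : gram_mx 0.
Proof. by exists 0%N, 0; rewrite trmx0 mul0mx. Qed.

Lemma gram_mxD M N : gram_mx M -> gram_mx N -> gram_mx (M + N).
Proof.
case=> s1 [G1 ->] [s2 [G2 ->]]; exists (s1 + s2)%N, (col_mx G1 G2).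
by rewrite tr_col_mx map_col_mx mul_row_col.
Qed.

Lemma gram_mx_sum I (s : seq I) (P : pred I) (F : I -> 'M[C]_r) :
  (forall i, P i -> gram_mx (F i)) -> gram_mx (\sum_(i <- s | P i) F i).
Proof. by move=> FP; apply: big_ind => //; [exact: gram_mx0 | exact: gram_mxD]. Qed.

Lemma gram_mxZ l M : 0 <= l -> gram_mx M -> gram_mx (l *: M).
Proof.
move=> l_ge0 [s [G ->]]; exists s, (sqrtC l *: G).
rewrite map_mxZ /= geC0_conj ?sqrtC_ge0 // -scalemxAr linearZ /= -scalemxAl.
by rewrite scalerA -expr2 sqrtCK.
Qed.

Lemma gram_mx_rank1 (u : 'cV[C]_r) : gram_mx (u *m adjmx u).
Proof. by exists 1%N, u^T; rewrite trmxK /adjmx map_trmx. Qed.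

Lemma gram_mx_delta (a : 'I_r) : gram_mx (delta_mx a a).
Proof.
by have := gram_mx_rank1 (delta_mx a 0); rewrite adjmx_delta mul_delta_mx.
Qed.

(* The Kraus operators of [kraus_map_mx K M] are [L c = \sum_a G c a *: K a]. *)
Lemma gram_mx_kraus n (K : 'I_r -> 'M[C]_n) M : gram_mx M ->
  exists s (L : 'I_s -> 'M[C]_n),
    (forall rho, kraus_map L rho = kraus_map_mx K M rho) /\
    \sum_c adjmx (L c) *m L c = kraus_tp_mx K M.
Proof.
case=> s [G ->]; exists s, (fun c => \sum_a G c a *: K a); split.
  move=> rho; rewrite /kraus_map /kraus_map_mx.
  under eq_bigr => c _ do rewrite adjmx_sum mulmx_suml mulmx_suml.
  rewrite exchange_big; apply: eq_bigr => a _.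
  under eq_bigr => c _ do rewrite mulmx_sumr.
  under eq_bigr => c _ do under eq_bigr => b _ do
    rewrite adjmxZ -!scalemxAl -scalemxAr scalerA.
  rewrite exchange_big; apply: eq_bigr => b _.
  by rewrite !mxE scaler_suml; apply: eq_bigr => c _; rewrite !mxE.
rewrite /kraus_tp_mx.
under eq_bigr => c _ do rewrite adjmx_sum mulmx_suml.
rewrite exchange_big; apply: eq_bigr => a _.
under eq_bigr => c _ do rewrite mulmx_sumr.
rewrite exchange_big; apply: eq_bigr => b _.
rewrite !mxE rmorph_sum scaler_suml; apply: eq_bigr => c _.
by rewrite adjmxZ -scalemxAl -scalemxAr scalerA !mxE rmorphM /= conjCK.
Qed.

Lemma gram_mx_id_add_pair (a b : 'I_r) (w : C) : `|w| <= 2^-1 ->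
  gram_mx (1%:M + (w *: delta_mx a b + w^* *: delta_mx b a)).
Proof.
move=> w_small; have [<-|ab] := eqVneq a b.
  have diag_ge0 : 0 <= 1 + (w + w^*).
    have x_real : w + w^* \is Num.real.
      by apply/CrealP; rewrite rmorphD /= conjCK addrC.
    have x_le1 : `|w + w^*| <= 1.
      apply: (le_trans (ler_normD _ _)); rewrite norm_conjC.
      by rewrite [leRHS](splitr 1) mul1r lerD.
    rewrite -[w + w^*]opprK subr_ge0.
    by apply: le_trans x_le1; rewrite -normrN real_ler_norm ?rpredN.
  rewrite mx1_sum_delta (bigD1 a) //= addrAC -addrA -scalerDl addrA.
  rewrite -{1}[delta_mx a a]scale1r -scalerDl.
  apply: gram_mxD; first exact: gram_mxZ diag_ge0 (gram_mx_delta a).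
  by apply: gram_mx_sum => c _; exact: gram_mx_delta.
have off_ge0 : 0 <= 1 - w * w^*.
  rewrite -normCK subr_ge0 exprn_ile1 //; apply: le_trans w_small _.
  by rewrite invf_le1 ?ler1n.
(* [u u^dagger] with [u = e_a + w^* e_b] produces the off-diagonal pair. *)
pose u : 'cV[C]_r := delta_mx a 0 + w^* *: delta_mx b 0.
have uuE : u *m adjmx u = delta_mx a a + w *: delta_mx a b + w^* *: delta_mx b a
    + (w^* * w) *: delta_mx b b.
  rewrite /u adjmxD adjmxZ conjCK !adjmx_delta mulmxDl !mulmxDr -!scalemxAl.
  by rewrite -!scalemxAr !mul_delta_mx scalerA addrA.
rewrite mx1_sum_delta (bigD1 a) //= (bigD1 b) 1?eq_sym //=.
have -> : delta_mx a a + (delta_mx b b + \sum_(i | (i != a) && (i != b)) delta_mx i i) +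
      (w *: delta_mx a b + w^* *: delta_mx b a) =
      u *m adjmx u + ((1 - w * w^*) *: delta_mx b b
         + \sum_(i | (i != a) && (i != b)) (delta_mx i i : 'M[C]_r)).
  by rewrite uuE; apply/matrixP => i j; rewrite !mxE; ring.
apply: gram_mxD; first exact: gram_mx_rank1.
apply: gram_mxD; first exact: gram_mxZ off_ge0 (gram_mx_delta b).
by apply: gram_mx_sum => c _; exact: gram_mx_delta.
Qed.

(* Spread [X] over the [r * r] entry pairs, each paired with [1 / (r * r)] of
   the identity. *)
Lemma gram_mx_id_add_herm (X : 'M[C]_r) : (0 < r)%N -> adjmx X = X ->
  (forall a b, `|X a b| <= 1) -> gram_mx (1%:M + ((r * r)%:R)^-1 *: X).
Proof.
move=> r_gt0 X_herm X_le1.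
have rr_neq0 : (r * r)%:R != 0 :> C by rewrite pnatr_eq0 -lt0n muln_gt0 r_gt0.
have pairsE : \sum_a \sum_b ((2^-1 * X a b) *: delta_mx a b
                             + (2^-1 * X a b)^* *: delta_mx b a) = X.
  have halfE (Y : 'M[C]_r) : \sum_a \sum_b (2^-1 * Y a b) *: delta_mx a b = 2^-1 *: Y.
    rewrite [in RHS](matrix_sum_delta Y) scaler_sumr; apply: eq_bigr => a _.
    by rewrite scaler_sumr; apply: eq_bigr => b _; rewrite scalerA.
  have conj_halfE : \sum_a \sum_b (2^-1 * X a b)^* *: delta_mx b a = 2^-1 *: X.
    rewrite exchange_big -[in RHS]X_herm -halfE; apply: eq_bigr => b _.
    by apply: eq_bigr => a _; rewrite adjmxE rmorphM fmorphV /= rmorph_nat.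
  under eq_bigr => a _ do rewrite big_split.
  have half_half : 2^-1 + 2^-1 = 1 :> C by field.
  by rewrite big_split /= halfE conj_halfE -scalerDl half_half scale1r.
have -> : 1%:M + ((r * r)%:R)^-1 *: X = \sum_a \sum_b ((r * r)%:R)^-1 *:
    (1%:M + ((2^-1 * X a b) *: delta_mx a b + (2^-1 * X a b)^* *: delta_mx b a)).
  under eq_bigr => a _ do rewrite -scaler_sumr big_split /=.
  rewrite -scaler_sumr big_split /= pairsE !sumr_const !card_ord.
  by rewrite scalerDr -mulrnA -scaler_nat scalerA mulVf // scale1r.
apply: gram_mx_sum => a _; apply: gram_mx_sum => b _.
apply: gram_mxZ; first by rewrite invr_ge0 ler0n.
apply: gram_mx_id_add_pair.
by rewrite normrM normfV normr_nat ler_piMr ?invr_ge0 ?ler0n.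
Qed.

Lemma gram_mx_id_add_herm_pm (X : 'M[C]_r) : (0 < r)%N -> adjmx X = X ->
  exists2 e : C, e != 0 & gram_mx (1%:M + e *: X) /\ gram_mx (1%:M + (- e) *: X).
Proof.
move=> r_gt0 X_herm.
pose N := 1 + \sum_(p : 'I_r * 'I_r) `|X p.1 p.2|.
have N_gt0 : 0 < N by rewrite ltr_wpDr // sumr_ge0.
have entry_le a b : `|X a b| <= N.
  by rewrite /N (bigD1 (a, b)) //= addrCA lerDl addr_ge0 ?sumr_ge0.
have scaled s : s \is Num.real -> `|s| = N^-1 ->
    gram_mx (1%:M + ((r * r)%:R^-1 * s) *: X).
  move=> s_real s_norm; rewrite -scalerA; apply: gram_mx_id_add_herm => //.
    by rewrite adjmxZ conj_Creal // X_herm.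
  by move=> a b; rewrite mxE normrM s_norm ler_pdivrMl // mulr1.
have rr_neq0 : (r * r)%:R != 0 :> C by rewrite pnatr_eq0 -lt0n muln_gt0 r_gt0.
exists ((r * r)%:R^-1 * N^-1).
  by apply: mulf_neq0; rewrite invr_eq0 // gt_eqF.
have Ninv_real : N^-1 \is Num.real by rewrite rpredV gtr0_real.
have Ninv_norm : `|N^-1| = N^-1 by rewrite gtr0_norm ?invr_gt0.
by rewrite -mulrN; split; apply: scaled; rewrite ?rpredN ?normrN.
Qed.

End Gram.

Section LinearAlgebra.
Variable C : numClosedFieldType.

Lemma exists_nontrivial_relation (T : finType) (A : {set T}) m n
    (f : T -> 'M[C]_(m, n)) : (m * n < #|A|)%N ->
  exists c : T -> C,
    [/\ exists t, c t != 0, forall t, t \notin A -> c t = 0 & \sum_t c t *: f t = 0].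
Proof.
move=> mn_lt_A.
pose M : 'M[C]_(#|A|, m * n) := \matrix_i mxvec (f (enum_val i)).
have kerM_neq0 : kermx M != 0.
  by rewrite kermx_eq0 /row_free ltn_eqF // (leq_ltn_trans (rank_leq_col M)).
pose u := nz_row (kermx M).
have uM0 : u *m M = 0 by apply/sub_kermxP; exact: nz_row_sub.
pose c t := \sum_(i | enum_val i == t) u 0 i.
exists c; split.
- have /matrix0Pn [i0 [i]] : u != 0 by rewrite nz_row_eq0.
  rewrite (ord1 i0) => ui; exists (enum_val i); rewrite /c (big_pred1 i) // => j.
  exact: (inj_eq enum_val_inj).
- move=> t tA; rewrite /c big_pred0 // => i.
  by apply: contraNF tA => /eqP <-; exact: enum_valP.
transitivity (vec_mx (u *m M)); last by rewrite uM0 linear0.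
rewrite mulmx_sum_row linear_sum (partition_big (@enum_val _ (mem A)) xpredT) //=.
apply: eq_bigr => t _; rewrite scaler_suml; apply: eq_bigr => i /eqP <-.
by rewrite rowK linearZ /= mxvecK.
Qed.

Lemma exists_herm_of_adj_closed r (P : 'M[C]_r -> Prop) :
    (forall M N, P M -> P N -> P (M + N)) -> (forall c M, P M -> P (c *: M)) ->
    (forall M, P M -> P (adjmx M)) ->
  forall Y, Y != 0 -> P Y -> exists X, [/\ X != 0, adjmx X = X & P X].
Proof.
move=> PD PZ Padj Y Y_neq0 PY.
have [Y_antiherm|re_neq0] := eqVneq (Y + adjmx Y) 0; last first.
  exists (Y + adjmx Y); split=> //; first by rewrite adjmxD adjmxK addrC.
  by apply: PD => //; apply: Padj.
exists ('i *: Y + (- 'i) *: adjmx Y); split.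
- have -> : adjmx Y = - Y by apply/eqP; rewrite -addr_eq0 addrC Y_antiherm.
  rewrite scaleNr scalerN opprK -scalerDl scaler_eq0 negb_or Y_neq0 andbT.
  by rewrite -mulr2n mulrn_eq0 neq0Ci.
- by rewrite adjmxD !adjmxZ adjmxK -conjCi conjCK addrC.
by apply: PD; apply: PZ => //; apply: Padj.
Qed.

End LinearAlgebra.

Section NullPairs.
Variables (C : numClosedFieldType) (n r : nat) (L : 'I_r -> 'M[C]_n).

Definition null_pair (a b : 'I_r) : bool := (L a == 0) || (L b == 0).

Definition null_pair_supported (X : 'M[C]_r) : Prop :=
  forall a b, ~~ null_pair a b -> X a b = 0.

Lemma null_pair_supported_cases X a b : null_pair_supported X ->
  [\/ X a b = 0, L a = 0 | L b = 0].
Proof.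
move=> X_supp; case: (boolP (null_pair a b)) => [/orP [] /eqP|/X_supp]; by constructor.
Qed.

Lemma kraus_map_mx_null X rho : null_pair_supported X -> kraus_map_mx L X rho = 0.
Proof.
move=> X_supp; apply: big1 => a _; apply: big1 => b _.
by case: (null_pair_supported_cases a b X_supp) => ->;
  rewrite ?scale0r ?adjmx0 ?mul0mx ?mulmx0 ?scaler0.
Qed.

Lemma kraus_tp_mx_null X : null_pair_supported X -> kraus_tp_mx L X = 0.
Proof.
move=> X_supp; apply: big1 => a _; apply: big1 => b _.
by case: (null_pair_supported_cases a b X_supp) => ->;
  rewrite ?rmorph0 ?scale0r ?adjmx0 ?mul0mx ?mulmx0 ?scaler0.
Qed.

Lemma card_null_pairs k : L k != 0 ->
  (#|[set i | L i == 0%R]|.+1 ^ 2 <= #|[set p | null_pair p.1 p.2]|.+1)%N.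
Proof.
move=> Lk_neq0; set Z := [set i | L i == 0]; pose S := k |: Z.
have card_S : #|S| = #|Z|.+1 by rewrite cardsU1 inE Lk_neq0.
have SS_null : setX S S :\ (k, k) \subset [set p | null_pair p.1 p.2].
  apply/subsetP => -[a b]; rewrite !inE xpair_eqE /null_pair /=.
  move=> /and3P [kk /predU1P [ak | ->] /predU1P [bk | ->]]; rewrite ?orbT //.
  by move: kk; rewrite ak bk eqxx.
rewrite -card_S -mulnn -(cardsX S S) (cardsD1 (k, k)) !inE eqxx add1n ltnS.
exact: subset_leq_card.
Qed.

Lemma exists_herm_null_pair_supported m (D : 'I_r -> 'M[C]_m) :
    (m * m < #|[set p | null_pair p.1 p.2]|)%N ->
  exists X, [/\ X != 0, adjmx X = X, null_pair_supported X & kraus_tp_mx D X = 0].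
Proof.
move=> card_lt.
have [c [[[a b] c_neq0] c_supp c_rel]] :=
  exists_nontrivial_relation (fun p => adjmx (D p.1) *m D p.2) card_lt.
pose P X := null_pair_supported X /\ kraus_tp_mx D X = 0.
have PD X Y : P X -> P Y -> P (X + Y).
  move=> [X_supp X0] [Y_supp Y0]; split; last by rewrite kraus_tp_mxD X0 Y0 addr0.
  by move=> a' b' ab'; rewrite mxE X_supp ?Y_supp ?addr0.
have PZ s X : P X -> P (s *: X).
  move=> [X_supp X0]; split; last by rewrite kraus_tp_mxZ X0 scaler0.
  by move=> a' b' ab'; rewrite mxE X_supp ?mulr0.
have Padj X : P X -> P (adjmx X).
  move=> [X_supp X0]; split; last by rewrite kraus_tp_mx_adj X0 adjmx0.
  by move=> a' b' ab'; rewrite adjmxE X_supp ?conjC0 // /null_pair orbC.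
(* [kraus_tp_mx D] is conjugate-linear, hence the conjugate. *)
pose Y := \matrix_(a, b) (c (a, b))^*.
have Y_neq0 : Y != 0.
  by apply/matrix0Pn; exists a, b; rewrite mxE conjC_eq0.
have PY : P Y.
  split=> [a' b' ab'|]; first by rewrite mxE c_supp ?conjC0 // inE.
  rewrite -[RHS]c_rel /kraus_tp_mx pair_bigA /=; apply: eq_bigr => -[a' b'] _.
  by rewrite mxE conjCK.
have [X [X_neq0 X_herm [X_supp X0]]] := exists_herm_of_adj_closed PD PZ Padj Y_neq0 PY.
by exists X.
Qed.

End NullPairs.

Section NoLeakage.
Variable C : numClosedFieldType.

Lemma is_state_delta n (i : 'I_n) : is_state (delta_mx i i : 'M[C]_n).
Proof.
split.
  by move=> x; rewrite -{2}[x]adjmxK mul_delta_adjmxE mul_conjC_ge0.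
rewrite /mxtrace (bigD1 i) //= big1 ?addr0 => [|k ki]; first by rewrite mxE eqxx.
by rewrite mxE (negbTE ki).
Qed.

(* The [(p, p)] entry of the image of [delta_mx q q] is [\sum_i |K i p q|^2]. *)
Lemma kraus_map_delta_eq0 n r (K : 'I_r -> 'M[C]_n) p q :
  kraus_map K (delta_mx q q) p p = 0 -> forall i, K i p q = 0.
Proof.
move=> sum0 i; apply/eqP; rewrite -mul_conjC_eq0; apply/eqP.
have sq_ge0 j : 0 <= K j p q * (K j p q)^* by exact: mul_conjC_ge0.
apply: (psumr_eq0P (P := xpredT) (fun j _ => sq_ge0 j)) => //.
by rewrite -[RHS]sum0 /kraus_map summxE; apply: eq_bigr => j _; rewrite mul_delta_adjmxE.
Qed.

Lemma block_diag_of_no_leakage d v r (Ct : 'M[C]_(d + v) -> 'M[C]_(d + v))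
    (K : 'I_r -> 'M[C]_(d + v)) :
  kraus_rep Ct K -> no_leakage Ct ->
  forall i, ursubmx (K i) = 0 /\ dlsubmx (K i) = 0.
Proof.
move=> [_ CtE] [CtA CtV] i; split; apply/matrixP => p q; rewrite !mxE.
  pose rho : 'M[C]_(d + v) := delta_mx (rshift d q) (rshift d q).
  have rho_Vac : supp_Vac rho.
    by split; [|split]; apply/matrixP => x y; rewrite !mxE ?eq_lrshift ?eq_rlshift ?andbF.
  have [Ct_ul _] := CtV rho (is_state_delta _) rho_Vac.
  apply: kraus_map_delta_eq0 => //; rewrite -CtE.
  by have := congr1 (fun M : 'M[C]_d => M p p) Ct_ul; rewrite !mxE.
pose rho : 'M[C]_(d + v) := delta_mx (lshift v q) (lshift v q).
have rho_A : supp_A rho.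
  by split; [|split]; apply/matrixP => x y; rewrite !mxE ?eq_lrshift ?eq_rlshift ?andbF.
have [_ [_ Ct_dr]] := CtA rho (is_state_delta _) rho_A.
apply: kraus_map_delta_eq0 => //; rewrite -CtE.
by have := congr1 (fun M : 'M[C]_v => M p p) Ct_dr; rewrite !mxE.
Qed.

End NoLeakage.

Lemma kraus_tp_exists_neq0 (C : numClosedFieldType) n r (K : 'I_r -> 'M[C]_n) :
  (0 < n)%N -> kraus_tp K -> exists k, K k != 0.
Proof.
move=> n_gt0 K_tp; have [k|K0] := pickP (fun k => K k != 0); first by exists k.
move/matrixP: K_tp => /(_ (Ordinal n_gt0) (Ordinal n_gt0)).
rewrite summxE big1 => [|k _]; last by move/negbFE/eqP: (K0 k) => ->; rewrite mulmx0 mxE.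
by rewrite !mxE eqxx => /eqP; rewrite eq_sym oner_eq0.
Qed.

Section BlockDiagonal.
Variables (C : numClosedFieldType) (d v r : nat).
Variables (K : 'I_r -> 'M[C]_(d + v)) (A : 'I_r -> 'M[C]_d) (V : 'I_r -> 'M[C]_v).
Hypothesis KE : forall i, K i = block_mx (A i) 0 0 (V i).

Lemma sum_block_diag I (s : seq I) (P : pred I) (F : I -> 'M[C]_d) (G : I -> 'M[C]_v) :
  \sum_(i <- s | P i) block_mx (F i) 0 0 (G i) =
  block_mx (\sum_(i <- s | P i) F i) 0 0 (\sum_(i <- s | P i) G i).
Proof.
elim/big_rec3: _ => [|i M F' G' _ ->]; first by rewrite block_mx0.
by rewrite add_block_mx !addr0.
Qed.

Lemma kraus_map_mx_block M R S :
  kraus_map_mx K M (block_mx R 0 0 S) =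
  block_mx (kraus_map_mx A M R) 0 0 (kraus_map_mx V M S).
Proof.
rewrite /kraus_map_mx -sum_block_diag; apply: eq_bigr => a _.
rewrite -sum_block_diag; apply: eq_bigr => b _.
rewrite !KE adjmx_block !adjmx0 !mulmx_block !(mulmx0, mul0mx, addr0, add0r).
by rewrite scale_block_mx !scaler0.
Qed.

Lemma kraus_tp_mx_block M :
  kraus_tp_mx K M = block_mx (kraus_tp_mx A M) 0 0 (kraus_tp_mx V M).
Proof.
rewrite /kraus_tp_mx -sum_block_diag; apply: eq_bigr => a _.
rewrite -sum_block_diag; apply: eq_bigr => b _.
rewrite !KE adjmx_block !adjmx0 !mulmx_block !(mulmx0, mul0mx, addr0, add0r).
by rewrite scale_block_mx !scaler0.
Qed.

Lemma kraus_tp_ulsub : kraus_tp K -> kraus_tp A.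
Proof.
move=> K_tp; rewrite /kraus_tp -kraus_tp_mx1.
by rewrite -[LHS](block_mxKul _ 0 0 (kraus_tp_mx V 1%:M)) -kraus_tp_mx_block
  kraus_tp_mx1 K_tp scalar_mx_block block_mxKul.
Qed.

Lemma no_leakage_kraus_map_mx M : no_leakage (kraus_map_mx K M).
Proof.
split=> rho _ [rho_ur [rho_dl rho_dr]]; rewrite -[rho]submxK rho_ur rho_dl rho_dr.
  by rewrite kraus_map_mx_block kraus_map_mx0 /supp_A block_mxKur block_mxKdl block_mxKdr.
by rewrite kraus_map_mx_block kraus_map_mx0 /supp_Vac block_mxKul block_mxKur block_mxKdl.
Qed.

Lemma restrict_A_kraus_map_mx M rho :
  restrict_A (kraus_map_mx K M) rho = kraus_map_mx A M rho.
Proof. by rewrite /restrict_A kraus_map_mx_block block_mxKul. Qed.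

End BlockDiagonal.

Section ExtremeVacuumExtension.
Variables (C : numClosedFieldType) (d v : nat) (Ch : 'M[C]_d -> 'M[C]_d).
Variables (Ct : 'M[C]_(d + v) -> 'M[C]_(d + v)) (r : nat).
Variables (K : 'I_r -> 'M[C]_(d + v)) (A : 'I_r -> 'M[C]_d) (V : 'I_r -> 'M[C]_v).
Hypothesis K_rep : kraus_rep Ct K.
Hypothesis KE : forall i, K i = block_mx (A i) 0 0 (V i).
Hypothesis Ct_ext : vacuum_extension Ch Ct.

Lemma restriction_kraus_map rho : Ch rho = kraus_map A rho.
Proof.
rewrite -Ct_ext.2.2 -kraus_map_mx1 -(restrict_A_kraus_map_mx KE).
by rewrite /restrict_A K_rep.2 kraus_map_mx1.
Qed.

Lemma vacuum_extension_perturbed X c :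
  gram_mx (1%:M + c *: X) -> null_pair_supported A X -> kraus_tp_mx V X = 0 ->
  vacuum_extension Ch (kraus_map_mx K (1%:M + c *: X)).
Proof.
move=> X_gram X_supp X_tp0; split; [|split].
- have [s [L [LE L_tp]]] := gram_mx_kraus K X_gram.
  exists s, L; split=> [|rho]; last by rewrite LE.
  rewrite /kraus_tp L_tp kraus_tp_mxD kraus_tp_mxZ kraus_tp_mx1.
  rewrite (kraus_tp_mx_block KE) kraus_tp_mx_null // X_tp0 block_mx0.
  by rewrite scaler0 addr0 K_rep.1.
- exact: no_leakage_kraus_map_mx KE _.
move=> rho; rewrite restriction_kraus_map (restrict_A_kraus_map_mx KE).
by rewrite kraus_map_mxD kraus_map_mxZ kraus_map_mx1 kraus_map_mx_null // scaler0 addr0.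
Qed.

Lemma extreme_perturbation_eq0 X :
  extreme_vacuum_extension Ch Ct -> lin_indep K -> adjmx X = X ->
  null_pair_supported A X -> kraus_tp_mx V X = 0 -> X = 0.
Proof.
move=> [_ Ct_extreme] K_free X_herm X_supp X_tp0.
have [//|X_neq0] := eqVneq X 0.
have r_gt0 : (0 < r)%N.
  by case/matrix0Pn: X_neq0 => a _; apply: leq_ltn_trans (ltn_ord a).
have [e e_neq0 [gram_plus gram_minus]] := gram_mx_id_add_herm_pm r_gt0 X_herm.
have Ct_mid rho : Ct rho = 2^-1 *: kraus_map_mx K (1%:M + e *: X) rho
                          + (1 - 2^-1) *: kraus_map_mx K (1%:M + (- e) *: X) rho.
  rewrite !kraus_map_mxD !kraus_map_mxZ kraus_map_mx1 K_rep.2.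
  by apply/matrixP => i j; rewrite !mxE; field.
have half_in01 : 0 < (2^-1 : C) < 1 by rewrite invr_gt0 ltr0n invf_lt1 ?ltr0n ?ltr1n.
have [plusE _] := Ct_extreme _ _ _ (vacuum_extension_perturbed gram_plus X_supp X_tp0)
  (vacuum_extension_perturbed gram_minus X_supp X_tp0) half_in01 Ct_mid.
apply: kraus_map_mx_inj K_free _ => rho; apply: (scalerI e_neq0); rewrite scaler0.
apply: (addrI (kraus_map_mx K 1%:M rho)); rewrite addr0 -kraus_map_mxZ -kraus_map_mxD.
by rewrite plusE K_rep.2 kraus_map_mx1.
Qed.

Lemma extreme_card_null_pairs :
  extreme_vacuum_extension Ch Ct -> lin_indep K ->
  (#|[set p | null_pair A p.1 p.2]| <= v * v)%N.
Proof.
move=> Ct_extreme K_free; rewrite leqNgt; apply/negP => card_gt.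
have [X [X_neq0 X_herm X_supp X_tp0]] := exists_herm_null_pair_supported V card_gt.
by move: X_neq0; rewrite (extreme_perturbation_eq0 Ct_extreme K_free X_herm) ?eqxx.
Qed.

End ExtremeVacuumExtension.

Lemma natr_le_sqrtC_sub1 (C : numClosedFieldType) n m :
  (n.+1 ^ 2 <= m)%N -> n%:R <= sqrtC m%:R - 1 :> C.
Proof.
move=> sq_le; rewrite lerBrDr natr1 -[X in X <= _](@sqrCK _ n.+1%:R) ?ler0n //.
by rewrite ler_sqrtC ?nnegrE ?exprn_ge0 ?ler0n // -natrX ler_nat.
Qed.

Theorem proposition5 (C : numClosedFieldType) (d v : nat) (hd : (0 < d)%N)
  (hv : (1 <= v)%N) (Ch : 'M[C]_d -> 'M[C]_d) (hCh : is_channel Ch)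
  (Ct : 'M[C]_(d + v) -> 'M[C]_(d + v)) (r : nat) (K : 'I_r -> 'M[C]_(d + v))
  (hK : kraus_rep Ct K) (hind : lin_indep K)
  (hext : extreme_vacuum_extension Ch Ct) :
  ((#|[set i : 'I_r | ulsubmx (K i) == 0]|)%:R <= sqrtC ((v ^ 2).+1)%:R - 1 :> C)
  /\ (v = 1%N -> forall i : 'I_r, ulsubmx (K i) != 0).
Proof.
have [[_ [Ct_nl _]] _] := hext.
have KE i : K i = block_mx (ulsubmx (K i)) 0 0 (drsubmx (K i)).
  have [ur0 dl0] := block_diag_of_no_leakage hK Ct_nl i.
  by rewrite -{1}[K i]submxK ur0 dl0.
have [k Ak_neq0] := kraus_tp_exists_neq0 hd (kraus_tp_ulsub KE hK.1).
set z := #|[set i : 'I_r | ulsubmx (K i) == 0]|.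
have z_sq_le : (z.+1 ^ 2 <= (v ^ 2).+1)%N.
  apply: leq_trans (card_null_pairs (L := fun i => ulsubmx (K i)) Ak_neq0) _.
  by rewrite ltnS -mulnn; apply: extreme_card_null_pairs hK KE hext.1 hext hind.
split=> [|v1 i]; first exact: natr_le_sqrtC_sub1.
apply: contraTneq z_sq_le => Ai0.
have z_gt0 : (0 < z)%N by apply/card_gt0P; exists i; rewrite inE Ai0.
by rewrite v1 -ltnNge -!mulnn; nia.
Qed.
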